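(* Let $t\geq 4$ be an even integer, let $k\geq 0$ be an integer and let $d$ be an even integer with $0\leq d<t$. Then the multiset $\{1,2^b,t^{tk+d}\}$ admits a special linear realization of type $2$ for every $b\geq t-1$ if $d\equiv 2\pmod 4$ and $t\equiv 2\pmod 4$, and for every $b\geq t-2$ otherwise.
   Context: $\{1,2^b,t^{m}\}$ is the multiset with one $1$, $b$ copies of $2$ and $m$ copies of $t$. For a multiset $L$ of positive integers with $|L|=v-1$, each at most $v-1$, a linear realization of $L$ is a Hamiltonian path $[x_0,\dots,x_{v-1}]$ of the complete graph on $\{0,\dots,v-1\}$ such that the multiset $\{|x_i-x_{i+1}|\}$ equals $L$. It is special of type $2$ if its endpoints are $0$ and $1$. *)

From mathcomp Require Import all_boot.
Set Implicit Arguments. Unset Strict Implicit. Unset Printing Implicit Defensive.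

Definition absdiff (a b : nat) : nat := (a - b) + (b - a).

Definition edge_lengths (p : seq nat) : seq nat :=
  pairmap absdiff (head 0 p) (behead p).

(* a linear realization of the multiset L (given as a list, up to order):
   a Hamiltonian path of K_v on {0,...,v-1}, v = |L|+1, i.e. an ordering p of
   {0,...,v-1}, whose multiset of edge lengths equals L *)
Definition linear_realization (L : seq nat) (p : seq nat) : Prop :=
  perm_eq p (iota 0 (size L).+1) /\ perm_eq (edge_lengths p) L.

Definition special_type2 (L : seq nat) (p : seq nat) : Prop :=
  linear_realization L p /\
  ((head 0 p = 0 /\ last 0 p = 1) \/ (head 0 p = 1 /\ last 0 p = 0)).

Definition ms_1_2b_tm (b t m : nat) : seq nat := 1 :: nseq b 2 ++ nseq m t.

From mathcomp Require Import all_boot zify.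
Set Implicit Arguments. Unset Strict Implicit.

(* Write t = 2h and d = 2s.  The vertices 0, ..., v-1 split into the t residue
   classes mod t, each an arithmetic progression of difference t.  A "snake"
   runs through these progressions one after the other, alternately upwards and
   downwards, so that the progressions contribute exactly t*k + d edges of
   length t.  The residues are ordered so that the snake starts at 0, ends at 1,
   and consecutive progressions are joined by edges of length 2, except for a
   single junction of length 1: this realizes {1, 2^(t-2), t^(tk+d)}.  When
   d = t = 2 (mod 4), vertex 1 is instead cut off its progression and visited
   last, which costs one more edge of length 2.
   Finally, reversing a realization from 0 to 1, shifting it up by one and
   prepending 0 adds one edge of length 2, so b can be increased at will. *)

Lemma absdiffC a b : absdiff a b = absdiff b a.
Proof. by rewrite /absdiff addnC. Qed.

Lemma absdiffDl n a b : absdiff (n + a) (n + b) = absdiff a b.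
Proof. by rewrite /absdiff !subnDl. Qed.

Lemma size_edge_lengths s : size (edge_lengths s) = (size s).-1.
Proof. by case: s => [|x s] //; rewrite /edge_lengths size_pairmap. Qed.

Lemma edge_lengths_cat s1 s2 : s1 != [::] -> s2 != [::] ->
  edge_lengths (s1 ++ s2) =
  edge_lengths s1 ++ absdiff (last 0 s1) (head 0 s2) :: edge_lengths s2.
Proof.
by case: s1 => [|x s1] // _; case: s2 => [|y s2] // _; rewrite /edge_lengths /= pairmap_cat.
Qed.

Lemma edge_lengths_rcons s x : s != [::] ->
  edge_lengths (rcons s x) = rcons (edge_lengths s) (absdiff (last 0 s) x).
Proof. by move=> s0; rewrite -!cats1 edge_lengths_cat. Qed.

Lemma edge_lengths_rev s : edge_lengths (rev s) = rev (edge_lengths s).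
Proof.
case: s => [|x s] //; elim: s x => [|y s IH] x //.
rewrite rev_cons edge_lengths_rcons -?size_eq0 ?size_rev // IH.
by rewrite rev_cons last_rcons absdiffC /edge_lengths /= rev_cons.
Qed.

Lemma edge_lengths_map_addn n s : edge_lengths (map (addn n) s) = edge_lengths s.
Proof.
case: s => [|x s] //; rewrite /edge_lengths /=.
by elim: s x => [|y s IH] x //=; rewrite IH absdiffDl.
Qed.

Lemma linear_realization_perm L L' p :
  perm_eq L L' -> linear_realization L p -> linear_realization L' p.
Proof.
move=> LL' [Vp Ep]; split; first by rewrite -(perm_size LL').
exact: perm_trans Ep LL'.
Qed.

Definition realization01 L p := linear_realization L p /\ head 0 p = 0 /\ last 0 p = 1.

Lemma realization01_cons2 L p :
  realization01 L p -> realization01 (2 :: L) (0 :: map (addn 1) (rev p)).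
Proof.
case: p => [|x s] [[Vp Ep] [/= x0 s1]]; first by move/perm_size: Vp.
subst x; case/lastP: s Vp Ep s1 => [|u y] // Vp Ep; rewrite last_rcons => y1; subst y.
have rev_p : rev (0 :: rcons u 1) = 1 :: rcons (rev u) 0 by rewrite rev_cons rev_rcons.
split; [split | by rewrite rev_p /= map_rcons last_rcons].
- have -> : iota 0 (size (2 :: L)).+1 = 0 :: map (addn 1) (iota 0 (size L).+1).
    by rewrite -iotaDl.
  rewrite perm_cons.
  by apply: perm_map; rewrite perm_rev.
- set q := map (addn 1) _.
  have -> : edge_lengths (0 :: q) = 2 :: edge_lengths q by rewrite /q rev_p.
  by rewrite perm_cons edge_lengths_map_addn edge_lengths_rev perm_rev.
Qed.

Lemma realization01_more_twos b b' t m p : b <= b' ->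
  realization01 (ms_1_2b_tm b t m) p ->
  exists p', realization01 (ms_1_2b_tm b' t m) p'.
Proof.
move=> /subnK <-; elim: (b' - b) => [|n IH] Rp; first by exists p.
have [q /realization01_cons2 [Rq q01]] := IH Rp.
exists (0 :: map (addn 1) (rev q)); split=> //.
apply: linear_realization_perm Rq; rewrite /ms_1_2b_tm addSn.
by rewrite -(cat1s 2) -(cat1s 1) perm_catCA.
Qed.

Lemma special_type2_realization01 L p : realization01 L p -> special_type2 L p.
Proof. by case=> Rp p01; split=> //; left. Qed.

Definition progression a t n := mkseq (fun i => a + t * i) n.

Lemma progressionS a t n : progression a t n.+1 = a :: progression (t + a) t n.
Proof.
rewrite /progression /mkseq /= muln0 addn0 -[iota 1 n]/(iota (1 + 0) n) iotaDl -map_comp.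
by congr (_ :: _); apply: eq_map => i /=; rewrite mulnDr muln1 addnA [t + a]addnC.
Qed.

Lemma map_addn_progression d a t n :
  map (addn d) (progression a t n) = progression (d + a) t n.
Proof. by rewrite -map_comp; apply: eq_map => i /=; rewrite addnA. Qed.

Lemma last_progression a t n : last 0 (progression a t n.+1) = a + t * n.
Proof. by rewrite /progression mkseqS last_rcons. Qed.

Lemma edge_lengths_progression a t n : edge_lengths (progression a t n.+1) = nseq n t.
Proof.
elim: n a => [|n IH] a //.
rewrite progressionS -cat1s edge_lengths_cat ?progressionS // -progressionS IH.
by rewrite /= /absdiff; congr (_ :: _); lia.
Qed.

Lemma perm_flatten_cons (T : Type) (U : eqType) (f : T -> U) (g : T -> seq U) s :
  perm_eq (flatten [seq f x :: g x | x <- s]) (map f s ++ flatten (map g s)).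
Proof.
elim: s => [|x s IH] //=.
by rewrite perm_cons perm_sym perm_catCA perm_cat2l perm_sym.
Qed.

Lemma residue_progressions_cover t k e : e <= t ->
  perm_eq (flatten [seq progression r t (k + (r < e)) | r <- iota 0 t])
          (iota 0 (t * k + e)).
Proof.
move=> et; elim: k => [|k IH].
  rewrite muln0 -(filter_iota_ltn 0 et) -{2}(flatten_seq1 (iota 0 t)).
  rewrite filter_flatten -map_comp (@eq_map _ _ _ (fun r => [seq x <- [:: r] | x < e])) //.
  by move=> r /=; case: (r < e); rewrite /progression /mkseq //= muln0 addn0.
rewrite (@eq_map _ _ _ (fun r => r :: map (addn t) (progression r t (k + (r < e))))); last first.
  by move=> r; rewrite addSn progressionS map_addn_progression.
apply: perm_trans (perm_flatten_cons id _ _) _.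
rewrite map_id (map_comp (map (addn t)) (fun r => progression r t (k + (r < e)))).
rewrite -map_flatten mulnS -addnA iotaD perm_cat2l add0n.
have -> : iota t (t * k + e) = map (addn t) (iota 0 (t * k + e)) by rewrite -iotaDl addn0.
exact: perm_map.
Qed.

Lemma iota0S n : iota 0 n.+1 = rcons (iota 0 n) n.
Proof. by rewrite -cats1 -addn1 iotaD. Qed.

Lemma perm_flatten_merge (T : eqType) (f g : nat -> seq T) n j : j < n ->
  (forall p, p < n -> p != j -> f p = g p) -> perm_eq (g j) (f j ++ f n) ->
  perm_eq (flatten [seq f p | p <- iota 0 n.+1]) (flatten [seq g p | p <- iota 0 n]).
Proof.
move=> jn fg gj; have jI : j \in iota 0 n by rewrite mem_iota.
have rem_fg : [seq f p | p <- rem j (iota 0 n)] = [seq g p | p <- rem j (iota 0 n)].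
  apply/eq_in_map => p; rewrite mem_rem_uniq ?iota_uniq // inE mem_iota => /andP [pj pn].
  exact: fg.
rewrite iota0S map_rcons -cats1 flatten_cat /= cats0.
have perm_j (F : nat -> seq T) : perm_eq (flatten [seq F p | p <- iota 0 n])
    (F j ++ flatten [seq F p | p <- rem j (iota 0 n)]).
  exact: perm_flatten (perm_map F (perm_to_rem jI)).
apply: perm_trans (perm_cat (perm_j f) (perm_refl _)) _.
rewrite perm_sym; apply: perm_trans (perm_j g) _; rewrite perm_sym.
rewrite /= rem_fg perm_sym; apply: perm_trans (perm_cat gj (perm_refl _)) _.
by apply/permP => P; rewrite !count_cat; lia.
Qed.

Lemma perm_iota_injective (c : nat -> nat) n :
  (forall p, p < n -> c p < n) -> {in gtn n &, injective c} ->
  perm_eq [seq c p | p <- iota 0 n] (iota 0 n).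
Proof.
move=> c_lt c_inj; have c_uniq : uniq (mkseq c n) by apply/mkseq_uniqP.
apply: uniq_perm => //; first exact: iota_uniq.
apply: (uniq_min_size c_uniq _ _).2; last by rewrite size_map.
by move=> x /mapP [p]; rewrite !mem_iota /= => /c_lt pn ->.
Qed.

Lemma perm_one_twos (f : nat -> nat) n j : j <= n ->
  (forall p, p <= n -> f p = if p == j then 1 else 2) ->
  perm_eq [seq f p | p <- iota 0 n.+1] (1 :: nseq n 2).
Proof.
move=> jn f12; have jI : j \in iota 0 n.+1 by rewrite mem_iota.
apply: perm_trans (perm_map f (perm_to_rem jI)) _.
rewrite /= f12 // eqxx perm_cons.
suff /all_pred1P -> : all (pred1 2) [seq f p | p <- rem j (iota 0 n.+1)].
  by rewrite size_map size_rem // size_iota.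
apply/allP => x /mapP [p].
rewrite mem_rem_uniq ?iota_uniq // inE mem_iota => /andP [pj pn] ->.
by rewrite f12 ?(negbTE pj).
Qed.

Section Snake.

Variables (t : nat) (base len : nat -> nat).

Definition column p :=
  let c := progression (base p) t (len p).+1 in if odd p then rev c else c.

Definition column_head p := if odd p then base p + t * len p else base p.
Definition column_last p := if odd p then base p else base p + t * len p.
Definition junction p := absdiff (column_last p) (column_head p.+1).

Definition snake n := flatten [seq column p | p <- iota 0 n].

Lemma column_neq0 p : column p != [::].
Proof. by rewrite /column progressionS; case: odd; rewrite -?size_eq0 ?size_rev. Qed.

Lemma head_column p : head 0 (column p) = column_head p.
Proof.
rewrite /column /column_head; case: odd; last by rewrite progressionS.
by rewrite /progression mkseqS rev_rcons.
Qed.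

Lemma last_column p : last 0 (column p) = column_last p.
Proof.
rewrite /column /column_last; case: odd; last exact: last_progression.
by rewrite progressionS rev_cons last_rcons.
Qed.

Lemma edge_lengths_column p : edge_lengths (column p) = nseq (len p) t.
Proof.
by rewrite /column; case: odd; rewrite ?edge_lengths_rev edge_lengths_progression ?rev_nseq.
Qed.

Lemma perm_column p : perm_eq (column p) (progression (base p) t (len p).+1).
Proof. by rewrite /column; case: odd; rewrite ?perm_rev. Qed.

Lemma snakeS n : snake n.+1 = snake n ++ column n.
Proof. by rewrite /snake -addn1 iotaD map_cat flatten_cat /= cats0. Qed.

Lemma snake_neq0 n : snake n.+1 != [::].
Proof.
by rewrite snakeS -size_eq0 size_cat addn_eq0 !size_eq0 (negbTE (column_neq0 n)) andbF.
Qed.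

Lemma head_snake n : head 0 (snake n.+1) = column_head 0.
Proof. by rewrite /snake /= muln0 addn0. Qed.

Lemma last_snake n : last 0 (snake n.+1) = column_last n.
Proof.
by rewrite snakeS last_cat; case: (column n) (column_neq0 n) (last_column n) => [|x s] // _ <-.
Qed.

Lemma edge_lengths_snake n :
  perm_eq (edge_lengths (snake n.+1))
          (nseq (sumn [seq len p | p <- iota 0 n.+1]) t ++ [seq junction p | p <- iota 0 n]).
Proof.
elim: n => [|n IH]; first by rewrite snakeS [snake 0]/= edge_lengths_column /= addn0 cats0.
rewrite snakeS edge_lengths_cat ?snake_neq0 ?column_neq0 //.
rewrite last_snake head_column edge_lengths_column.
apply: perm_trans (perm_cat IH (perm_refl _)) _.
rewrite (iota0S n.+1) map_rcons sumn_rcons nseqD -!catA perm_cat2l.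
rewrite (iota0S n) map_rcons -cats1 -/(junction n).
by apply/permP => P; rewrite !count_cat /=; lia.
Qed.

Lemma perm_snake n :
  perm_eq (snake n) (flatten [seq progression (base p) t (len p).+1 | p <- iota 0 n]).
Proof.
by rewrite /snake; elim: (iota 0 n) => // p s IH; exact: perm_cat (perm_column p) IH.
Qed.

Lemma snake_realization01 n m j : 1 < n ->
  perm_eq (snake n) (iota 0 (n + m)) ->
  j.+1 < n -> (forall p, p.+1 < n -> junction p = if p == j then 1 else 2) ->
  column_head 0 = 0 -> column_last n.-1 = 1 ->
  realization01 (ms_1_2b_tm (n - 2) t m) (snake n).
Proof.
case: n => [|[|n]] // _ Vs jn J12 h0 l1; rewrite !subSS subn0.
have E := edge_lengths_snake n.+1.
have sum_len : sumn [seq len p | p <- iota 0 n.+2] = m.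
  move/perm_size: (E); rewrite size_edge_lengths (perm_size Vs) size_cat size_nseq.
  by rewrite size_map !size_iota; lia.
split; [split | by rewrite head_snake last_snake].
  by rewrite [size _]/= size_cat !size_nseq.
rewrite sum_len in E; apply: perm_trans E _.
rewrite /ms_1_2b_tm perm_catC -cat_cons perm_cat2r.
by apply: (@perm_one_twos junction n j) => // p pn; apply: J12.
Qed.

End Snake.

Lemma perm_residue_snake t k e (c : nat -> nat) : e <= t ->
  perm_eq [seq c p | p <- iota 0 t] (iota 0 t) ->
  perm_eq (snake t c (fun p => k + (c p < e)) t) (iota 0 (t + (t * k + e))).
Proof.
move=> et c_perm; apply: perm_trans (perm_snake _ _ _ _) _.
rewrite (map_comp (fun r => progression r t (k.+1 + (r < e))) c).
apply: perm_trans (perm_flatten (perm_map _ c_perm)) _.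
by rewrite addnA -mulnS; apply: residue_progressions_cover.
Qed.

Ltac case_ifs :=
  repeat match goal with
  | |- context [if ?b then _ else _] => case: (boolP b) => ? /=
  | |- context [nat_of_bool ?b] => case: (boolP b) => ? /=
  end.

(* The orders of the residues mod 2h in which the snake visits the classes:
     A: 0, 2, ..., 2h-2, 2h-1, 2h-3, ..., 1
     B: 0, 2h-2, ..., 4, 2, 3, 5, ..., 2h-1, 1
     C: 0, 2h-2, ..., 4, 2, 1, 2h-1, 2h-3, ..., 3
   The junction of length 1 is the one after 2h-2 in A, after 2 in B and C. *)
Definition order_A h p := if p < h then 2 * p else 2 * (2 * h - 1 - p) + 1.

Lemma realization01_A h k s : 2 <= h -> ~~ odd s -> s < h ->
  exists p, realization01 (ms_1_2b_tm (2 * h - 2) (2 * h) (2 * h * k + 2 * s)) p.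
Proof.
move=> h2 s_even sh.
exists (snake (2 * h) (order_A h) (fun p => k + (order_A h p < 2 * s)) (2 * h)).
apply: (snake_realization01 (j := h - 1)); first lia.
- apply: perm_residue_snake; first lia.
  apply: perm_iota_injective => [p|p q]; rewrite /order_A ?inE; case_ifs; lia.
- lia.
- move=> p p2h; rewrite /junction /column_last /column_head /order_A /absdiff; case_ifs; lia.
- by rewrite /column_head /order_A /=; case_ifs; lia.
- rewrite /column_last /order_A; case_ifs; lia.
Qed.

Definition order_B h p :=
  if p == 0 then 0 else if p < h then 2 * h - 2 * p
  else if p == 2 * h - 1 then 1 else 2 * p + 3 - 2 * h.

Lemma realization01_B h k s : 2 <= h -> ~~ odd h -> odd s -> s < h ->
  exists p, realization01 (ms_1_2b_tm (2 * h - 2) (2 * h) (2 * h * k + 2 * s)) p.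
Proof.
move=> h2 h_even s_odd sh.
exists (snake (2 * h) (order_B h) (fun p => k + (order_B h p < 2 * s)) (2 * h)).
apply: (snake_realization01 (j := h - 1)); first lia.
- apply: perm_residue_snake; first lia.
  apply: perm_iota_injective => [p|p q]; rewrite /order_B ?inE; case_ifs; lia.
- lia.
- move=> p p2h; rewrite /junction /column_last /column_head /order_B /absdiff; case_ifs; lia.
- by rewrite /column_head /order_B /=.
- rewrite /column_last /order_B; case_ifs; lia.
Qed.

Definition order_C h p :=
  if p == 0 then 0 else if p < h then 2 * h - 2 * p
  else if p == h then 1 else 4 * h + 1 - 2 * p.

(* Column h of order C loses its bottom vertex 1, which becomes the extra last
   column 2h. *)
Definition base_C h p := if p == h then 2 * h + 1 else if p == 2 * h then 1 else order_C h p.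
Definition len_C h k e p := if p == h then k else if p == 2 * h then 0 else k + (order_C h p < e).

Lemma perm_snake_C h k e : 0 < h -> 1 < e ->
  perm_eq (snake (2 * h) (base_C h) (len_C h k e) (2 * h).+1)
          (snake (2 * h) (order_C h) (fun p => k + (order_C h p < e)) (2 * h)).
Proof.
move=> h0 e1; apply: perm_trans (perm_snake _ _ _ _) _.
rewrite perm_sym; apply: perm_trans (perm_snake _ _ _ _) _; rewrite perm_sym.
apply: (perm_flatten_merge (j := h)); first lia.
  move=> p p2h ph; rewrite /base_C /len_C (negbTE ph) (_ : p == 2 * h = false) //; lia.
rewrite /base_C /len_C !eqxx (_ : 2 * h == h = false); last lia.
rewrite /order_C (_ : h == 0 = false) ?ltnn ?eqxx ?e1; last lia.
rewrite !addn1 progressionS addn1 perm_sym perm_catC.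
by rewrite [progression 1 _ 1]/progression /= muln0.
Qed.

Lemma realization01_C h k s : 2 <= h -> odd h -> odd s -> s < h ->
  exists p, realization01 (ms_1_2b_tm (2 * h - 1) (2 * h) (2 * h * k + 2 * s)) p.
Proof.
move=> h2 h_odd s_odd sh; have e1 : 1 < 2 * s + 1 by lia.
exists (snake (2 * h) (base_C h) (len_C h k (2 * s + 1)) (2 * h).+1).
rewrite (_ : 2 * h - 1 = (2 * h).+1 - 2); last lia.
apply: (snake_realization01 (j := h - 1)); first lia.
- apply: perm_trans (perm_snake_C k (ltnW h2) e1) _.
  rewrite (_ : (2 * h).+1 + _ = 2 * h + (2 * h * k + (2 * s + 1))); last lia.
  apply: perm_residue_snake; first lia.
  apply: perm_iota_injective => [p|p q]; rewrite /order_C ?inE; case_ifs; lia.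
- lia.
- move=> p p2h; rewrite /junction /column_last /column_head /base_C /len_C /order_C /absdiff.
  case_ifs; lia.
- by rewrite /column_head /base_C /order_C /=; case_ifs; lia.
- rewrite /column_last /base_C /len_C; case_ifs; lia.
Qed.

Theorem proposition3p9 (t k d b : nat) :
  4 <= t -> ~~ odd t -> ~~ odd d -> d < t ->
  (if (d %% 4 == 2) && (t %% 4 == 2) then t - 1 <= b else t - 2 <= b) ->
  exists p : seq nat, special_type2 (ms_1_2b_tm b t (t * k + d)) p.
Proof.
move=> t4 t_even d_even dt b_ge.
suff [b0 [p [b0b Rp]]] : exists b0 p, b0 <= b /\ realization01 (ms_1_2b_tm b0 t (t * k + d)) p.
  have [p' Rp'] := realization01_more_twos b0b Rp.
  by exists p'; apply: special_type2_realization01.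
have t_half : t = 2 * t./2 by rewrite mul2n even_halfK.
have d_half : d = 2 * d./2 by rewrite mul2n even_halfK.
move: b_ge; rewrite t_half d_half; set h := t./2; set s := d./2 => b_ge.
have h2 : 2 <= h by lia.
have sh : s < h by lia.
have [s_odd | s_even] := boolP (odd s); last first.
  have [p Rp] := realization01_A k h2 s_even sh.
  by exists (2 * h - 2), p; split=> //; move: b_ge; case: ifP; lia.
have [h_odd | h_even] := boolP (odd h); last first.
  have [p Rp] := realization01_B k h2 h_even s_odd sh.
  by exists (2 * h - 2), p; split=> //; move: b_ge; case: ifP; lia.
have [p Rp] := realization01_C k h2 h_odd s_odd sh.
by exists (2 * h - 1), p; split=> //; move: b_ge; case: ifP; lia.
Qed.
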